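(* Let $m=x_{i_1}x_{i_2}\cdots x_{i_s}$ be a squarefree monomial of $S=k[x_1,\dots,x_n]$ with $i_1<i_2<\dots<i_s$, and let $B=\mathrm{sfBorel}(m)$. Then \[B^{\vee}=\mathrm{sfBorel}\big(x_1x_2\cdots x_{i_1},\; x_2x_3\cdots x_{i_2},\;\dots,\; x_sx_{s+1}\cdots x_{i_s}\big).\]
   Context: For monomials $m_1=x_{a_1}\cdots x_{a_r}$, $m_2=x_{b_1}\cdots x_{b_t}$ in factored form (indices weakly increasing), $m_1$ precedes $m_2$ in the Borel order if $r\ge t$ and $a_j\le b_j$ for $j\le t$. For a set $T$ of squarefree monomials, $\mathrm{sfBorel}(T)$ is the ideal generated by all squarefree monomials that precede some element of $T$ in the Borel order (the smallest squarefree Borel ideal containing $T$). For a squarefree monomial $u$, $P_u$ is the prime ideal generated by the variables dividing $u$. The Alexander dual of a squarefree monomial ideal $I$ with minimal monomial generators $u_1,\dots,u_t$ is $I^{\vee}=P_{u_1}\cap\dots\cap P_{u_t}$. *)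

(* Monomial ideals of S = k[x_1,...,x_n] are encoded by the
   set of monomials they contain (a monomial ideal is determined by its
   monomials).  Variable x_{i+1} corresponds to i : 'I_n (0-based). *)
From mathcomp Require Import all_boot.
Set Implicit Arguments. Unset Strict Implicit. Unset Printing Implicit Defensive.

Definition mono (n : nat) := {ffun 'I_n -> nat}.

Definition mdiv n (a b : mono n) : bool := [forall i, a i <= b i].

Definition mideal n := mono n -> Prop.

Definition ideal_gen n (G : mono n -> Prop) : mideal n :=
  fun w => exists g, G g /\ mdiv g w.

Definition sqm n (A : {set 'I_n}) : mono n := [ffun i => nat_of_bool (i \in A)].

(* factored form: increasing list of (0-based) indices of the variables *)
Definition idxs n (A : {set 'I_n}) : seq nat := [seq val i | i <- enum A].

Definition borel_prec n (A B : {set 'I_n}) : bool :=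
  (size (idxs B) <= size (idxs A)) &&
  all (fun j => nth 0 (idxs A) j <= nth 0 (idxs B) j) (iota 0 (size (idxs B))).

Definition sfBorel n (T : {set 'I_n} -> Prop) : mideal n :=
  ideal_gen (fun g => exists A, g = sqm A /\ exists t, T t /\ borel_prec A t).

Definition mingen n (I : mideal n) (u : mono n) : Prop :=
  I u /\ forall v, I v -> mdiv v u -> v = u.

Definition Pvar n (u : mono n) : mideal n :=
  fun w => exists i, 0 < u i /\ 0 < w i.

Definition adual n (I : mideal n) : mideal n :=
  fun w => forall u, mingen I u -> Pvar u w.

(* the squarefree monomial x_{j+1} x_{j+2} ... x_{ij+1} (0-based: {j..ij}) *)
Definition interval_set n (j ij : nat) : {set 'I_n} :=
  [set k : 'I_n | (j <= val k) && (val k <= ij)].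

From mathcomp Require Import all_boot zify.
From Stdlib Require Import Classical.
Set Implicit Arguments. Unset Strict Implicit. Unset Printing Implicit Defensive.

(* The minimal generators of B = sfBorel(m) are the x_A with A Borel-below m, so
   w lies in the dual of B iff its support W meets every such A.  As the Borel
   order is stable under enlarging the smaller set, this means that the
   complement ~W is not Borel-below m.  Everything is then read off the counting
   function c(x) = #{i in ~W | i <= x}: with a_1 < ... < a_s the indices of m,
   ~W is Borel-below m iff c(a_j) >= j for all j, while
   W is Borel-below x_j x_(j+1) ... x_(a_j) iff c(a_j) < j. *)

Lemma idxs_sorted n (A : {set 'I_n}) : sorted ltn (idxs A).
Proof.
rewrite /idxs /enum_mem -enumT -filter_predI sorted_map.
apply: sorted_filter; first exact: ltn_trans.
by rewrite -sorted_map -enumT val_enum_ord iota_ltn_sorted.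
Qed.

Lemma mem_idxs n (A : {set 'I_n}) (i : 'I_n) : (val i \in idxs A) = (i \in A).
Proof. by rewrite /idxs mem_map ?mem_enum //; exact: val_inj. Qed.

Lemma idxs_lt n (A : {set 'I_n}) x : x \in idxs A -> x < n.
Proof. by case/mapP => i _ ->; apply: ltn_ord. Qed.

Definition card_upto n (A : {set 'I_n}) (x : nat) : nat := #|[set i in A | val i <= x]|.

Lemma count_leq_idxs n (A : {set 'I_n}) x :
  count (fun i => i <= x) (idxs A) = card_upto A x.
Proof.
rewrite /idxs count_map /card_upto cardE -size_filter.
apply/perm_size/uniq_perm; [exact/filter_uniq/enum_uniq | exact: enum_uniq | move=> i].
by rewrite mem_filter !mem_enum !inE andbC.
Qed.

Lemma count_leq_iota x k : x < k -> count (fun i => i <= x) (iota 0 k) = x.+1.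
Proof.
move=> xk; rewrite -(subnKC xk) iotaD count_cat.
have /eqP -> : count (fun i => i <= x) (iota 0 x.+1) == x.+1.
  by rewrite -{2}(size_iota 0 x.+1) -all_count; apply/allP => i; rewrite mem_iota.
rewrite (@eq_in_count _ _ pred0) ?count_pred0 ?addn0 // => i.
by rewrite mem_iota /= => /andP[/leq_gtF].
Qed.

Lemma card_upto_setT n x : x < n -> card_upto [set: 'I_n] x = x.+1.
Proof.
by move=> xn; rewrite -count_leq_idxs /idxs enum_setT -enumT val_enum_ord count_leq_iota.
Qed.

Lemma card_uptoC n (A : {set 'I_n}) x : x < n -> card_upto A x + card_upto (~: A) x = x.+1.
Proof.
move=> xn; rewrite -(card_upto_setT xn) /card_upto -(cardsID A [set i in [set: _] | val i <= x]).
by congr (_ + _); apply: eq_card => i; rewrite !inE andbC.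
Qed.

Lemma leq_card_upto n (A B : {set 'I_n}) x y : A \subset B -> x <= y -> card_upto A x <= card_upto B y.
Proof.
move=> /subsetP AB xy; apply/subset_leq_card/subsetP => i; rewrite !inE.
by case/andP => /AB -> /leq_trans ->.
Qed.

Lemma card_upto_size n (A : {set 'I_n}) x : card_upto A x <= size (idxs A).
Proof. by rewrite -count_leq_idxs count_size. Qed.

Lemma sorted_nth_leq_count (s : seq nat) k x : sorted ltn s -> k < size s ->
  (nth 0 s k <= x) = (k < count (fun i => i <= x) s).
Proof.
elim: s k => [|a s IH] k //= s_sorted.
have s_gt_a : all (fun y => a < y) s := order_path_min ltn_trans s_sorted.
have count0 : a <= x = false -> count (fun i => i <= x) s = 0.
  move=> ax; apply/eqP; rewrite -leqn0 leqNgt -has_count; apply/hasP => -[y ys yx].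
  by move: ax; rewrite (leq_trans (ltnW (allP s_gt_a y ys)) yx).
case: k => [|k] /= ks; first by case ax: (a <= x); rewrite //= count0.
rewrite IH ?(path_sorted s_sorted) //.
by case ax: (a <= x); [rewrite add1n | rewrite count0].
Qed.

(* The k-th index of A is at most b iff more than k indices of A are at most b. *)
Lemma borel_precE n (A B : {set 'I_n}) :
  borel_prec A B = all (fun k => k < card_upto A (nth 0 (idxs B) k)) (iota 0 (size (idxs B))).
Proof.
rewrite /borel_prec; case: leqP => [sizeBA | sizeAB] /=.
  apply: eq_in_all => k; rewrite mem_iota => /andP[_ kB].
  by rewrite sorted_nth_leq_count ?idxs_sorted ?count_leq_idxs // (leq_trans kB sizeBA).
apply/esym/allP => all_lt.
have last_in : (size (idxs B)).-1 \in iota 0 (size (idxs B)).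
  by rewrite mem_iota add0n ltn_predL (leq_ltn_trans (leq0n _) sizeAB).
have := all_lt _ last_in; have := card_upto_size A (nth 0 (idxs B) (size (idxs B)).-1).
lia.
Qed.

Lemma nth_idxs_bounds n (A : {set 'I_n}) k : k < size (idxs A) ->
  k <= nth 0 (idxs A) k < n.
Proof.
move=> kA; have aA := mem_nth 0 kA; have an := idxs_lt aA.
have := sorted_nth_leq_count (nth 0 (idxs A) k) (idxs_sorted A) kA.
rewrite leqnn count_leq_idxs an andbT => /esym k_lt_card.
by rewrite -ltnS -(card_uptoC A an) (leq_trans k_lt_card) ?leq_addr.
Qed.

Lemma borel_prec_subset n (A A' B : {set 'I_n}) :
  A \subset A' -> borel_prec A B -> borel_prec A' B.
Proof.
rewrite !borel_precE => AA' /allP prec; apply/allP => k kB.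
exact: leq_trans (prec k kB) (leq_card_upto AA' (leqnn _)).
Qed.

Lemma idxs_interval n j x : j <= x < n ->
  idxs (interval_set n j x) = iota j (x - j).+1.
Proof.
case/andP => jx xn; apply: (irr_sorted_eq ltn_trans ltnn (idxs_sorted _) (iota_ltn_sorted _ _)).
move=> y; rewrite mem_iota addnS subnKC // ltnS.
case yn: (y < n); last first.
  by apply/idP/idP => [/idxs_lt|/andP[_ /leq_ltn_trans/(_ xn)]]; rewrite yn.
by rewrite -[y]/(val (Ordinal yn)) mem_idxs inE.
Qed.

Lemma borel_prec_interval n (W : {set 'I_n}) j x : j <= x < n ->
  borel_prec W (interval_set n j x) = (card_upto (~: W) x <= j).
Proof.
move=> /[dup] /andP[jx xn] jxn; rewrite borel_precE idxs_interval // size_iota.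
apply/allP/idP => [/(_ (x - j)) | compl_le l].
  rewrite mem_iota ltnSn => /(_ isT); rewrite nth_iota // subnKC // => lt.
  have := card_uptoC W xn; lia.
rewrite mem_iota add0n ltnS => /andP[_ lxj]; rewrite nth_iota ?ltnS //.
have jlx : j + l <= x by lia.
have := card_uptoC W (leq_ltn_trans jlx xn); have := leq_card_upto (subxx (~: W)) jlx; lia.
Qed.

Lemma borel_transversal n (m W : {set 'I_n}) :
  (forall A, borel_prec A m -> A :&: W != set0) <->
  exists2 j, j < size (idxs m) & borel_prec W (interval_set n j (nth 0 (idxs m) j)).
Proof.
have meets_iff : (forall A, borel_prec A m -> A :&: W != set0) <-> ~~ borel_prec (~: W) m.
  split => [meets | not_prec A precA].
    by apply/negP => /meets; rewrite setIC setICr eqxx.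
  apply: contraNneq not_prec => /eqP; rewrite setI_eq0 disjoints_subset => AW.
  exact: borel_prec_subset AW precA.
rewrite meets_iff borel_precE -has_predC; split => [/hasP[j] | [j jm]].
  rewrite mem_iota /= -leqNgt => jm compl_le.
  by exists j => //; rewrite borel_prec_interval ?nth_idxs_bounds.
rewrite borel_prec_interval ?nth_idxs_bounds // => compl_le.
by apply/hasP; exists j; rewrite ?mem_iota //= -leqNgt.
Qed.

Definition supp n (w : mono n) : {set 'I_n} := [set i | 0 < w i].

Lemma mdiv_refl n (v : mono n) : mdiv v v.
Proof. exact/forallP. Qed.

Lemma mdiv_trans n (a b c : mono n) : mdiv a b -> mdiv b c -> mdiv a c.
Proof.
by move=> /forallP ab /forallP bc; apply/forallP => i; apply: leq_trans (ab i) (bc i).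
Qed.

Lemma mdiv_sqm n (A : {set 'I_n}) (w : mono n) : mdiv (sqm A) w = (A \subset supp w).
Proof.
apply/forallP/subsetP => [dvd i iA | sub i]; first by have := dvd i; rewrite ffunE iA inE.
by rewrite ffunE; case iA: (i \in A) => //=; have := sub i iA; rewrite inE.
Qed.

Lemma Pvar_mdiv n (a b w : mono n) : mdiv a b -> Pvar a w -> Pvar b w.
Proof. by move=> /forallP ab [i [ai wi]]; exists i; split; first exact: leq_trans (ab i). Qed.

Lemma Pvar_sqm n (A : {set 'I_n}) (w : mono n) : Pvar (sqm A) w <-> A :&: supp w != set0.
Proof.
split => [[i []] | /set0Pn[i]].
  by rewrite ffunE lt0b => iA wi; apply/set0Pn; exists i; rewrite !inE iA.
by rewrite !inE => /andP[iA wi]; exists i; rewrite ffunE iA.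
Qed.

Lemma mdiv_deg_lt n (a b : mono n) : mdiv a b -> a <> b -> \sum_i a i < \sum_i b i.
Proof.
move=> /forallP ab neq; case: (pickP (fun i => a i < b i)) => [i lt | not_lt]; last first.
  by case: neq; apply/ffunP => i; apply/eqP; rewrite eqn_leq ab leqNgt not_lt.
rewrite (bigD1 i) //= [X in _ < X](bigD1 i) //= -addSn.
by apply: leq_add => //; apply: leq_sum => j _; apply: ab.
Qed.

Lemma exists_mingen n (I : mideal n) v : I v -> exists2 u, mingen I u & mdiv u v.
Proof.
elim: {v}(\sum_i v i).+1 {-2}v (ltnSn (\sum_i v i)) => // N IH v degv Iv.
case: (classic (exists v', [/\ I v', mdiv v' v & v' <> v])) => [[v' [Iv' dv ne]] | minimal].
  have [|u mu du] := IH v' _ Iv'; first exact: leq_trans (mdiv_deg_lt dv ne) degv.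
  by exists u => //; apply: mdiv_trans du dv.
exists v; last exact: mdiv_refl.
by split => // v' Iv' dv; apply: NNPP => ne; apply: minimal; exists v'.
Qed.

Lemma adual_ideal_gen n (G : mono n -> Prop) (w : mono n) :
  adual (ideal_gen G) w <-> forall g, G g -> Pvar g w.
Proof.
split => [dual g Gg | Pw u [[g [Gg gu]] _]]; last exact: Pvar_mdiv gu (Pw g Gg).
have Ig : ideal_gen G g by exists g; split => //; apply: mdiv_refl.
have [u mu ug] := exists_mingen Ig.
exact: Pvar_mdiv ug (dual u mu).
Qed.

Lemma adual_sfBorel n (T : {set 'I_n} -> Prop) (w : mono n) :
  adual (sfBorel T) w <->
  forall A t, T t -> borel_prec A t -> A :&: supp w != set0.
Proof.
rewrite /sfBorel adual_ideal_gen; split => [Pw A t Tt precA | meets _ [A [-> [t [Tt precA]]]]].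
  by apply/Pvar_sqm/Pw; exists A; split => //; exists t.
exact/Pvar_sqm/(meets A t).
Qed.

Lemma sfBorelE n (T : {set 'I_n} -> Prop) (w : mono n) :
  sfBorel T w <-> exists2 t, T t & borel_prec (supp w) t.
Proof.
split => [[_ [[A [-> [t [Tt precA]]]]]] | [t Tt prec]].
  by rewrite mdiv_sqm => Aw; exists t => //; apply: borel_prec_subset Aw precA.
by exists (sqm (supp w)); split; [exists (supp w); split => //; exists t | rewrite mdiv_sqm].
Qed.

Theorem theorem3p18 (n : nat) (m : {set 'I_n}) :
  forall w : mono n,
    adual (sfBorel (fun t => t = m)) w <->
    sfBorel (fun t => exists2 j, j < size (idxs m) &
                        t = interval_set n j (nth 0 (idxs m) j)) w.
Proof.
move=> w; rewrite adual_sfBorel sfBorelE.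
apply: iff_trans (iff_trans (borel_transversal m (supp w)) _); split.
- by move=> meets A; apply: meets.
- by move=> meets A _ ->; apply: meets.
- by case=> j jm prec; exists (interval_set n j (nth 0 (idxs m) j)) => //; exists j.
- by case=> _ [j jm ->] prec; exists j.
Qed.
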